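(* Every pair-symmetric grid-labelled graph (with at least one edge) is separable.
   Context: A grid-labelled graph of type $(a,b)$ is a simple graph $G$ whose vertex set is the grid $[a]\times[b]$. If $G$ has $m\ge1$ edges, $\rho(G)=L(G)/(2m)$, where $L(G)$ is the combinatorial Laplacian, viewed as a density matrix on $\mathbb{C}^a\otimes\mathbb{C}^b$ with vertex $(i,j)$ corresponding to $|i\rangle\otimes|j\rangle$; $G$ is separable if $\rho(G)$ is a convex combination of tensor products of density matrices. An edge $\{(i,j),(k,l)\}$ is diagonal if $i\neq k$ and $j\neq l$. $G$ is pair-symmetric if for each diagonal edge $\{(i,j),(k,l)\}\in E(G)$, the edge $\{(k,j),(i,l)\}$ also belongs to $E(G)$. *)

From HB Require Import structures.
From mathcomp Require Import all_boot all_order all_algebra.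
Set Implicit Arguments. Unset Strict Implicit. Unset Printing Implicit Defensive.
Import Order.TTheory GRing.Theory Num.Theory.
Local Open Scope ring_scope.

Section Grid.
Variables (C : numClosedFieldType) (a b : nat).

Definition vtx := ('I_a * 'I_b)%type.

(* vertex (i,j) <-> basis vector |i> (x) |j>, i.e. index i*b+j of C^(a*b) *)
Definition vidx (x : vtx) : 'I_(a * b) := mxvec_index x.1 x.2.

Definition grid_mx (f : vtx -> vtx -> C) : 'M[C]_(a * b) :=
  \matrix_(p, q) \sum_(x | vidx x == p) \sum_(y | vidx y == q) f x y.

Definition kron (A : 'M[C]_a) (B : 'M[C]_b) : 'M[C]_(a * b) :=
  grid_mx (fun x y => A x.1 y.1 * B x.2 y.2).

Definition simple_graph (e : rel vtx) : Prop :=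
  (forall x y, e x y = e y x) /\ (forall x, e x x = false).

Definition two_m (e : rel vtx) : nat := #|[set p : vtx * vtx | e p.1 p.2]|.

Definition degree (e : rel vtx) (x : vtx) : nat := #|[set y | e x y]|.

Definition laplacian (e : rel vtx) : 'M[C]_(a * b) :=
  grid_mx (fun x y => if x == y then (degree e x)%:R
                      else if e x y then -1 else 0).

Definition rho (e : rel vtx) : 'M[C]_(a * b) :=
  ((two_m e)%:R)^-1 *: laplacian e.

Definition pair_symmetric (e : rel vtx) : Prop :=
  forall i j k l, (i != k) -> (j != l) -> e (i, j) (k, l) -> e (k, j) (i, l).

End Grid.

Section Density.
Variables (C : numClosedFieldType).

Definition conjT n (M : 'M[C]_n) : 'M[C]_n := map_mx Num.conj M^T.

Definition psd n (M : 'M[C]_n) : Prop :=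
  conjT M = M /\
  forall v : 'rV[C]_n, 0 <= (v *m M *m map_mx Num.conj v^T) 0 0.

Definition density n (M : 'M[C]_n) : Prop := psd M /\ \tr M = 1.

Definition separable a b (rho : 'M[C]_(a * b)) : Prop :=
  exists (N : nat) (w : 'I_N -> C) (A : 'I_N -> 'M[C]_a) (B : 'I_N -> 'M[C]_b),
    [/\ forall t, 0 <= w t,
        \sum_(t < N) w t = 1,
        forall t, density (A t) /\ density (B t)
      & rho = \sum_(t < N) w t *: kron (A t) (B t)].

End Density.

From HB Require Import structures.
From mathcomp Require Import all_boot all_order all_algebra ring.
Import Order.TTheory GRing.Theory Num.Theory.
Local Open Scope ring_scope.

(* For an ordered edge (x, y) = ((i,j),(k,l)) and a sign s = +-1 put
   v = e_i + s e_k and w = e_j - s e_l.  Then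
   v (x) w = (e_x - e_y) + s (e_(k,j) - e_(i,l)), so summing the product states
   vv^* (x) ww^* over both signs kills the cross terms and leaves twice the
   projectors onto e_x - e_y and onto the "swapped" difference e_(k,j) - e_(i,l).
   Summed over all ordered edges, the first family gives 2 L; pair symmetry says
   that swapping is a bijection of the ordered edges, so the second family gives
   2 L as well.  Hence 8 L is a nonnegative combination of product states, and
   rho(G), having trace 1, is separable. *)

Section GridMatrices.
Variables (C : numClosedFieldType) (a b : nat).
Implicit Types f g : vtx a b -> vtx a b -> C.

Lemma vidx_inj : injective (@vidx a b).
Proof.
move=> [i j] [k l]; rewrite /vidx /mxvec_index /= => /(congr1 val) /= eq_ij_kl.
by have /enum_rank_inj -> : enum_rank (i, j) = enum_rank (k, l) by apply: val_inj.
Qed.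

Lemma eq_grid_mx f g : (forall x y, f x y = g x y) -> grid_mx f = grid_mx g.
Proof.
move=> fg; apply/matrixP => p q; rewrite !mxE.
by apply: eq_bigr => x _; apply: eq_bigr => y _.
Qed.

Lemma scale_grid_mx (k : C) f : k *: grid_mx f = grid_mx (fun x y => k * f x y).
Proof.
apply/matrixP => p q; rewrite !mxE mulr_sumr.
by apply: eq_bigr => x _; rewrite mulr_sumr.
Qed.

Lemma sum_grid_mx (T : finType) (F : T -> vtx a b -> vtx a b -> C) :
  \sum_t grid_mx (F t) = grid_mx (fun x y => \sum_t F t x y).
Proof.
apply/matrixP => p q; rewrite summxE !mxE.
under eq_bigr do rewrite mxE.
by rewrite exchange_big; apply: eq_bigr => x _; rewrite exchange_big.
Qed.

Lemma mxtrace_grid_mx f : \tr (grid_mx f) = \sum_x f x x.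
Proof.
rewrite /mxtrace; under eq_bigr do rewrite mxE.
rewrite (partition_big (@vidx a b) xpredT) //=.
apply: eq_bigr => p _; apply: eq_bigr => x /eqP <-.
by rewrite (big_pred1 x) // => y /=; rewrite (inj_eq vidx_inj).
Qed.

End GridMatrices.

Section ProductStates.
Variable C : numClosedFieldType.

Definition outer_mx {n} (v : 'I_n -> C) : 'M[C]_n := \matrix_(i, j) (v i * (v j)^*).

Lemma mxtrace_outer {n} (v : 'I_n -> C) : \tr (outer_mx v) = \sum_i v i * (v i)^*.
Proof. by apply: eq_bigr => i _; rewrite mxE. Qed.

Lemma mxtrace_outer_ge0 {n} (v : 'I_n -> C) : 0 <= \tr (outer_mx v).
Proof. by rewrite mxtrace_outer; apply: sumr_ge0 => i _; apply: mul_conjC_ge0. Qed.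

Lemma outer_mx_eq0 {n} (v : 'I_n -> C) : \tr (outer_mx v) = 0 -> outer_mx v = 0.
Proof.
rewrite mxtrace_outer => /eqP; rewrite psumr_eq0 => [/allP v_eq0|i _]; last first.
  exact: mul_conjC_ge0.
have vi0 i : v i = 0 by apply/eqP; rewrite -mul_conjC_eq0; exact: v_eq0 (mem_index_enum i).
by apply/matrixP => i j; rewrite !mxE vi0 mul0r.
Qed.

(* The quadratic form of v v^* at r is |<r, v>|^2. *)
Lemma psd_scale_outer {n} (s : C) (v : 'I_n -> C) : 0 <= s -> psd (s *: outer_mx v).
Proof.
move=> s_ge0; split.
  apply/matrixP => i j; rewrite /conjT !mxE !rmorphM /= (geC0_conj s_ge0) conjCK.
  by rewrite (mulrC (v j)^*).
move=> r; pose rv := \sum_i r 0 i * v i.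
have -> : (r *m (s *: outer_mx v) *m map_mx Num.conj r^T) 0 0 = s * (rv * rv^*).
  rewrite mxE rmorph_sum /= !mulr_sumr; apply: eq_bigr => j _.
  rewrite mulr_suml mulr_sumr [X in X * _]mxE mulr_suml.
  by apply: eq_bigr => i _; rewrite !mxE rmorphM /=; ring.
by rewrite mulr_ge0 // mul_conjC_ge0.
Qed.

Lemma density_normalized_outer {n} (v : 'I_n -> C) :
  \tr (outer_mx v) != 0 -> density ((\tr (outer_mx v))^-1 *: outer_mx v).
Proof.
move=> tr_neq0; split; last by rewrite mxtraceZ mulVf.
by apply: psd_scale_outer; rewrite invr_ge0 mxtrace_outer_ge0.
Qed.

Lemma density_delta_outer {n} (i0 : 'I_n) :
  density (outer_mx (fun i => (i == i0)%:R : C)).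
Proof.
have tr1 : \tr (outer_mx (fun i => (i == i0)%:R : C)) = 1.
  rewrite mxtrace_outer (bigD1 i0) //= eqxx conjC_nat mulr1 big1 ?addr0 //.
  by move=> i /negbTE ->; rewrite mul0r.
have := @density_normalized_outer _ (fun i => (i == i0)%:R : C).
by rewrite tr1 invr1 scale1r; apply; rewrite oner_eq0.
Qed.

Variables a b : nat.

Lemma kronZ (s t : C) (A : 'M[C]_a) (B : 'M[C]_b) :
  kron (s *: A) (t *: B) = (s * t) *: kron A B.
Proof. by rewrite /kron scale_grid_mx; apply: eq_grid_mx => x y; rewrite !mxE; ring. Qed.

Lemma kron0mx (B : 'M[C]_b) : kron (0 : 'M[C]_a) B = 0.
Proof. by rewrite -(scale0r 0) -[B]scale1r kronZ mul0r scale0r. Qed.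

Lemma kronmx0 (A : 'M[C]_a) : kron A (0 : 'M[C]_b) = 0.
Proof. by rewrite -(scale0r 0) -[A]scale1r kronZ mulr0 scale0r. Qed.

Lemma mxtrace_kron (A : 'M[C]_a) (B : 'M[C]_b) : \tr (kron A B) = \tr A * \tr B.
Proof.
rewrite /kron mxtrace_grid_mx /mxtrace big_distrlr /= pair_bigA /=.
by apply: eq_bigr => -[i j].
Qed.

Lemma kron_outer (v : 'I_a -> C) (w : 'I_b -> C) :
  kron (outer_mx v) (outer_mx w) =
  grid_mx (fun x y => v x.1 * w x.2 * (v y.1 * w y.2)^*).
Proof. by apply: eq_grid_mx => x y; rewrite !mxE rmorphM /=; ring. Qed.

(* Each term is renormalised to a product of density matrices; terms with a
   zero factor vanish and get an arbitrary product state [i0, j0] instead. *)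
Lemma separable_outer_comb (T : finType) (c : T -> C)
    (v : T -> 'I_a -> C) (w : T -> 'I_b -> C) (R : 'M[C]_(a * b))
    (i0 : 'I_a) (j0 : 'I_b) :
  (forall t, 0 <= c t) -> \tr R = 1 ->
  R = \sum_t c t *: kron (outer_mx (v t)) (outer_mx (w t)) -> separable R.
Proof.
move=> c_ge0 trR1 defR.
pose nv t := \tr (outer_mx (v t)); pose nw t := \tr (outer_mx (w t)).
pose A t := if nv t == 0 then outer_mx (fun i => (i == i0)%:R : C)
            else (nv t)^-1 *: outer_mx (v t).
pose B t := if nw t == 0 then outer_mx (fun j => (j == j0)%:R : C)
            else (nw t)^-1 *: outer_mx (w t).
pose wt t := c t * (nv t * nw t).
have termE t : c t *: kron (outer_mx (v t)) (outer_mx (w t)) = wt t *: kron (A t) (B t).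
  rewrite /wt /A /B; have [nv0|nv_neq0] := eqVneq (nv t) 0.
    by rewrite (outer_mx_eq0 _ nv0) kron0mx nv0 mul0r mulr0 !scale0r scaler0.
  have [nw0|nw_neq0] := eqVneq (nw t) 0.
    by rewrite (outer_mx_eq0 _ nw0) kronmx0 nw0 mulr0 mulr0 !scale0r scaler0.
  by rewrite kronZ scalerA; congr (_ *: _); field; rewrite nv_neq0 nw_neq0.
exists #|T|, (wt \o enum_val), (A \o enum_val), (B \o enum_val); split => /=.
- by move=> k; rewrite !mulr_ge0 ?mxtrace_outer_ge0.
- rewrite -(big_enum_val wt) -trR1 defR raddf_sum /=.
  by apply: eq_bigr => t _; rewrite mxtraceZ mxtrace_kron.
- by move=> k; rewrite /A /B; split; case: ifP => [_|/negbT ?];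
    apply: density_delta_outer || apply: density_normalized_outer.
- by rewrite defR -(big_enum_val (fun t => wt t *: kron (A t) (B t)));
    apply: eq_bigr => t _; rewrite termE.
Qed.

End ProductStates.

Arguments outer_mx {C n} v.

Section Laplacian.
Variables (C : numClosedFieldType) (a b : nat) (e : rel (vtx a b)).
Hypothesis e_simple : simple_graph e.

Definition edge_vec (x y z : vtx a b) : C := (z == x)%:R - (z == y)%:R.

Lemma sum_delta {T : finType} (z : T) (F : T -> C) : \sum_x (z == x)%:R * F x = F z.
Proof.
rewrite (bigD1 z) //= eqxx mul1r big1 ?addr0 // => x.
by rewrite eq_sym => /negbTE ->; rewrite mul0r.
Qed.

Lemma degree_sum z : (degree e z)%:R = \sum_y (e z y)%:R :> C.
Proof.
rewrite /degree -sum1_card natr_sum big_mkcond /=.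
by apply: eq_bigr => y _; rewrite inE; case: (e z y).
Qed.

Lemma two_m_sum : (two_m e)%:R = \sum_x \sum_y (e x y)%:R :> C.
Proof.
rewrite /two_m -sum1_card natr_sum big_mkcond pair_bigA /=.
by apply: eq_bigr => -[x y] _; rewrite inE; case: (e x y).
Qed.

Lemma mxtrace_rho : (two_m e)%:R != 0 :> C -> \tr (rho C e) = 1.
Proof.
move=> m_neq0; rewrite mxtraceZ mxtrace_grid_mx.
under eq_bigr do rewrite eqxx degree_sum.
by rewrite -two_m_sum mulVf.
Qed.

(* Each unordered edge {x, y} contributes (e_x - e_y)(e_x - e_y)^* twice. *)
Lemma laplacian_edge_sum :
  2 *: laplacian C e =
  grid_mx (fun z z' => \sum_x \sum_y (e x y)%:R * (edge_vec x y z * edge_vec x y z')).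
Proof.
have [e_sym e_irr] := e_simple.
rewrite scale_grid_mx; apply: eq_grid_mx => z z'.
pose f x y : C := (e x y)%:R * ((z == x)%:R * (z' == x)%:R - (z == x)%:R * (z' == y)%:R).
have -> : \sum_x \sum_y (e x y)%:R * (edge_vec x y z * edge_vec x y z')
          = \sum_x \sum_y f x y + \sum_x \sum_y f y x.
  rewrite -big_split; apply: eq_bigr => x _; rewrite -big_split; apply: eq_bigr => y _.
  by rewrite /f /edge_vec e_sym /=; ring.
have sum_f : \sum_x \sum_y f x y = (z' == z)%:R * (degree e z)%:R - (e z z')%:R.
  rewrite degree_sum -(sum_delta z (fun x => (z' == x)%:R * \sum_y (e x y)%:R - (e x z')%:R)).
  apply: eq_bigr => x _; rewrite -(sum_delta z' (fun y => (e x y)%:R)) mulr_sumr -sumrB mulr_sumr.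
  by apply: eq_bigr => y _; rewrite /f; ring.
rewrite [X in _ + X]exchange_big /= sum_f eq_sym.
by case: eqVneq => [<-|_]; rewrite ?e_irr //=; case: (e z z') => /=; ring.
Qed.

End Laplacian.

Arguments edge_vec {C a b} x y z.

Section ProductDecomposition.
Variables (C : numClosedFieldType) (a b : nat) (e : rel (vtx a b)).
Hypotheses (e_simple : simple_graph e) (e_pair : pair_symmetric e).

(* ((i,j),(k,l)) |-> ((k,j),(i,l)): the other diagonal of the rectangle. *)
Definition swap_pair (p : vtx a b * vtx a b) : vtx a b * vtx a b :=
  ((p.2.1, p.1.2), (p.1.1, p.2.2)).

Lemma swap_pairK : involutive swap_pair.
Proof. by move=> [[i j] [k l]]. Qed.

(* Non-diagonal pairs are fixed by the swap, up to the order of the endpoints. *)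
Lemma pair_symmetric_swap p : e (swap_pair p).1 (swap_pair p).2 = e p.1 p.2.
Proof.
have [e_sym _] := e_simple.
suff swap_edge q : e q.1 q.2 -> e (swap_pair q).1 (swap_pair q).2.
  by apply/idP/idP => [/swap_edge|]; rewrite ?swap_pairK; last exact: swap_edge.
case: q => [[i j] [k l]] /= e_ijkl.
have [i_eq_k|i_neq_k] := eqVneq i k; first by subst k.
have [j_eq_l|j_neq_l] := eqVneq j l; first by subst l; rewrite e_sym.
exact: e_pair.
Qed.

Definition left_vec (t : (vtx a b * vtx a b) * bool) (i : 'I_a) : C :=
  (i == t.1.1.1)%:R + (-1) ^+ t.2 * (i == t.1.2.1)%:R.

Definition right_vec (t : (vtx a b * vtx a b) * bool) (j : 'I_b) : C :=
  (j == t.1.1.2)%:R - (-1) ^+ t.2 * (j == t.1.2.2)%:R.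

Lemma conj_left_vec t i : (left_vec t i)^* = left_vec t i.
Proof. by rewrite rmorphD rmorphM /= rmorph_sign !conjC_nat. Qed.

Lemma conj_right_vec t j : (right_vec t j)^* = right_vec t j.
Proof. by rewrite rmorphB rmorphM /= rmorph_sign !conjC_nat. Qed.

Lemma left_right_vec_mul t z :
  left_vec t z.1 * right_vec t z.2 =
  edge_vec t.1.1 t.1.2 z + (-1) ^+ t.2 * edge_vec (swap_pair t.1).1 (swap_pair t.1).2 z.
Proof.
case: t z => [[[i j] [k l]] s] [i' j']; rewrite /left_vec /right_vec /edge_vec /=.
by rewrite !xpair_eqE -!mulnb !natrM; case: s => /=; ring.
Qed.

Lemma laplacian_product_decomposition :
  8 *: laplacian C e =
  \sum_t (e t.1.1 t.1.2)%:R *: kron (outer_mx (left_vec t)) (outer_mx (right_vec t)).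
Proof.
have -> : 8 = 4 * 2 :> C by rewrite -natrM.
rewrite -scalerA laplacian_edge_sum // scale_grid_mx.
under eq_bigr do rewrite kron_outer scale_grid_mx.
rewrite sum_grid_mx; apply: eq_grid_mx => z z'.
pose X p : C := edge_vec p.1 p.2 z * edge_vec p.1 p.2 z'.
have swap_sum : \sum_p (e p.1 p.2)%:R * X (swap_pair p) = \sum_p (e p.1 p.2)%:R * X p.
  rewrite (reindex_inj (can_inj swap_pairK)) /=.
  by apply: eq_bigr => p _; rewrite swap_pairK pair_symmetric_swap.
have sum_pair_bool (G : (vtx a b * vtx a b) * bool -> C) :
    \sum_t G t = \sum_p \sum_s G (p, s).
  by rewrite pair_bigA; apply: eq_bigr => -[].
under [RHS]eq_bigr do rewrite rmorphM /= conj_left_vec conj_right_vec !left_right_vec_mul.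
transitivity (2 * (\sum_p (e p.1 p.2)%:R * X p + \sum_p (e p.1 p.2)%:R * X (swap_pair p))).
  by rewrite swap_sum pair_bigA /X /=; ring.
rewrite sum_pair_bool -big_split mulr_sumr; apply: eq_bigr => p _.
by rewrite big_bool /X /=; ring.
Qed.

End ProductDecomposition.

Theorem mainTheorem8 (C : numClosedFieldType) (a b : nat) (e : rel (vtx a b)) :
  simple_graph e ->
  (exists x y, e x y) ->
  pair_symmetric e ->
  separable (rho C e).
Proof.
move=> e_simple [x [y exy]] e_pair.
have m_neq0 : (two_m e)%:R != 0 :> C.
  by rewrite pnatr_eq0 -lt0n; apply/card_gt0P; exists (x, y); rewrite inE.
pose k : C := ((two_m e)%:R)^-1 / 8.
apply: (@separable_outer_comb C a b _ (fun t => k * (e t.1.1 t.1.2)%:R)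
         (@left_vec C a b) (@right_vec C a b) _ x.1 x.2).
- by move=> t; rewrite !mulr_ge0 ?invr_ge0 ?ler0n.
- exact: mxtrace_rho.
- rewrite /rho -[laplacian C e](scalerK (a := 8)) ?pnatr_eq0 //.
  rewrite laplacian_product_decomposition // scalerA scaler_sumr.
  by apply: eq_bigr => t _; rewrite scalerA.
Qed.
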